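(* Let $\alpha>0$, and let $N^\pm(\alpha)$, $\sigma$ be as in the context. Let $N:\mathbb R\to\mathbb R$ be the $\alpha$-periodic function with $N(t)=N^+(\alpha)e^{-t}$ for $t\in(0,\alpha)$, and define, for $s\ge0$, $t\in\mathbb R$, $$n(s,t)=N(t-s)\exp\Big(-\int_0^s\mathbf 1_{\{u>\sigma(N(t-s+u))\}}\,du\Big),$$ the periodic solution of $\partial_t n+\partial_s n+\mathbf 1_{\{s>\sigma(N(t))\}}n=0$, $n(0,t)=N(t)$. Then for every $t\in\mathbb R$ at which $N$ is continuous, $$N(t)=\int_{\sigma(N(t))}^\infty n(s,t)\,ds\qquad\text{and}\qquad\int_0^\infty n(s,t)\,ds=1,$$ i.e. $(n,N)$ is a periodic solution of the nonlinear model with $p(s,x)=\mathbf 1_{\{s>\sigma(x)\}}$.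
   Context: For $\alpha>0$: $N^-(\alpha)=\frac1{2e^\alpha-1}$, $N^+(\alpha)=\frac{e^\alpha}{2e^\alpha-1}$ (so $0<N^-<N^+<1$), and $\sigma(x)=2\alpha$ for $x\in[0,N^-(\alpha)]$, $\sigma(x)=2\alpha-\ln x+\ln N^-(\alpha)$ for $x\in[N^-(\alpha),N^+(\alpha)]$, $\sigma(x)=\alpha$ for $x\ge N^+(\alpha)$. *)

From Stdlib Require Import Reals Lra ClassicalEpsilon.
Open Scope R_scope.

Definition Nminus (a : R) : R := 1 / (2 * exp a - 1).
Definition Nplus (a : R) : R := exp a / (2 * exp a - 1).

(* sigma(x) = 2a on [0,N^-], 2a - ln x + ln N^- on [N^-,N^+], a on [N^+,oo).
   (Values for x < 0 are irrelevant; we extend by 2a.) *)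
Definition sigmaA (a x : R) : R :=
  if Rle_dec x (Nminus a) then 2 * a
  else if Rle_dec x (Nplus a) then 2 * a - ln x + ln (Nminus a)
  else a.

(* Total Riemann integral: the value of RiemannInt when f is Riemann
   integrable on [a,b] (RiemannInt is proof-irrelevant), arbitrary otherwise. *)
Definition Rint (f : R -> R) (a b : R) : R :=
  epsilon (inhabits 0)
    (fun v => forall pr : Riemann_integrable f a b, RiemannInt pr = v).

Definition improper_integral_eq (f : R -> R) (a l : R) : Prop :=
  (forall b, a <= b -> inhabited (Riemann_integrable f a b)) /\
  (forall eps, 0 < eps -> exists M, forall b, M <= b -> a <= b ->
      Rabs (Rint f a b - l) < eps).

Definition inner_ind (a : R) (N : R -> R) (s t : R) (u : R) : R :=
  if Rlt_dec (sigmaA a (N (t - s + u))) u then 1 else 0.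

Definition nsol (a : R) (N : R -> R) (s t : R) : R :=
  N (t - s) * exp (- Rint (inner_ind a N s t) 0 s).

(* Write t = k a + theta.  Continuity of N at t forces 0 < theta < a, since the
   sawtooth N jumps at every multiple of a.  On each open period cell,
   N(x) = N^+ e^{-(x mod a)} and sigma inverts this profile:
   sigma(N(x)) = a + (x mod a).  Hence the indicator inside n(s,t) is a step
   function whose jump 2a - ((t-s) mod a) lies on the lattice of cells, its
   integral over [0,s] is max(0, s - 2a + ((t-s) mod a)), and on the s-cell
   (theta + m a, theta + (m+1) a) the density n(.,t) is an explicit exponential
   "ncell m", which is its own derivative.  Summing cells gives
     int_{theta+a}^{theta+a+na} n = N(t) (1 - e^{-na}),
     int_0^{theta+a+na} n = 1 - N(t) e^{-na},
   and since sigma(N(t)) = theta + a both improper integrals follow. *)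

From Stdlib Require Import Reals Lra Lia ZArith ClassicalEpsilon.
From Coquelicot Require Import Coquelicot.
Open Scope R_scope.

Lemma Rint_of_is_RInt (f : R -> R) (x y v : R) : is_RInt f x y v -> Rint f x y = v.
Proof.
  intros H.
  assert (Hex : ex_RInt f x y) by (exists v; exact H).
  pose proof (ex_RInt_Reals_0 _ _ _ Hex) as pr0.
  assert (E : exists w, forall pr : Riemann_integrable f x y, RiemannInt pr = w).
  { exists (RiemannInt pr0). intros pr. apply RiemannInt_P5. }
  unfold Rint. rewrite <- (epsilon_spec (inhabits 0) _ E pr0), <- RInt_Reals.
  now apply is_RInt_unique.
Qed.

(* Chasles' relation, with the sum of real-valued integrals written in R. *)
Lemma is_RInt_Chasles_R (f : R -> R) (x c y l1 l2 : R) :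
  is_RInt f x c l1 -> is_RInt f c y l2 -> is_RInt f x y (l1 + l2).
Proof. exact (is_RInt_Chasles f x c y l1 l2). Qed.

Lemma is_RInt_same_value (f : R -> R) (x y v w : R) :
  is_RInt f x y v -> is_RInt f x y w -> v = w.
Proof.
  intros Hv Hw. now rewrite <- (is_RInt_unique _ _ _ _ Hv), <- (is_RInt_unique _ _ _ _ Hw).
Qed.

Lemma is_RInt_const_on (f : R -> R) (x y c : R) :
  x <= y -> (forall u, x < u < y -> f u = c) -> is_RInt f x y ((y - x) * c).
Proof.
  intros Hxy Hf. apply (is_RInt_ext (fun _ => c)).
  - intros u Hu. rewrite Rmin_left, Rmax_right in Hu by lra. symmetry. now apply Hf.
  - exact (is_RInt_const x y c).
Qed.

Lemma nat_above (r : R) : exists n : nat, r <= INR n.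
Proof.
  destruct (archimed r) as [H1 _]. exists (Z.to_nat (up r)).
  destruct (Z_le_gt_dec 0 (up r)).
  - rewrite INR_IZR_INZ, Z2Nat.id by lia. lra.
  - assert (IZR (up r) <= 0) by (apply IZR_le; lia). pose proof (pos_INR (Z.to_nat (up r))). lra.
Qed.

Lemma exp_neg_nat_mul (n : nat) (x : R) : exp (- (INR n * x)) = exp (- x) ^ n.
Proof.
  induction n as [|n IH].
  - simpl. rewrite Rmult_0_l, Ropp_0. apply exp_0.
  - rewrite S_INR. simpl pow. rewrite <- IH, <- exp_plus. f_equal. ring.
Qed.

Lemma exp_le_compat (x y : R) : x <= y -> exp x <= exp y.
Proof. intros [H|<-]; [left; now apply exp_increasing | apply Rle_refl]. Qed.

Lemma lattice_floor (p al x : R) : 0 < al ->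
  exists m : Z, p + IZR m * al <= x < p + IZR m * al + al.
Proof.
  intros Hal. destruct (archimed ((x - p) / al)) as [H1 H2].
  exists (up ((x - p) / al) - 1)%Z. rewrite minus_IZR.
  assert (E : (x - p) / al * al = x - p) by (field; lra).
  split; nra.
Qed.

Lemma lattice_ind (p al : R) (P : R -> R -> Prop) : 0 < al ->
  (forall x c y, x <= c <= y -> P x c -> P c y -> P x y) ->
  (forall (m : Z) x y, x <= y -> p + IZR m * al <= x -> y <= p + IZR m * al + al -> P x y) ->
  forall x y, x <= y -> P x y.
Proof.
  intros Hal Hsplit Hcell.
  assert (Hspan : forall (n : nat) (m : Z) x y, p + IZR m * al <= x <= y ->
             y <= p + IZR m * al + INR n * al -> P x y).
  { induction n as [|n IH]; intros m x y Hx Hy.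
    - apply (Hcell m); simpl in Hy; lra.
    - assert (Hshift : IZR (m + 1) * al = IZR m * al + al) by (rewrite plus_IZR; ring).
      rewrite S_INR in Hy.
      destruct (Rle_dec x (p + IZR m * al + al)) as [Hx1|Hx1].
      + destruct (Rle_dec y (p + IZR m * al + al)) as [Hy1|Hy1]; [apply (Hcell m); lra|].
        apply (Hsplit x (p + IZR m * al + al) y); [lra|apply (Hcell m); lra|].
        apply (IH (m + 1)%Z); rewrite Hshift; lra.
      + apply (IH (m + 1)%Z); rewrite Hshift; lra. }
  intros x y Hxy.
  destruct (lattice_floor p al x Hal) as [m Hm].
  destruct (nat_above ((y - p) / al - IZR m)) as [n Hn].
  apply (Hspan n m); [lra|].
  assert (E : (y - p) / al * al = y - p) by (field; lra). nra.
Qed.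

Lemma is_RInt_cellwise (f F : R -> R) (p al : R) : 0 < al ->
  (forall (m : Z) x y, x <= y -> p + IZR m * al <= x -> y <= p + IZR m * al + al ->
     is_RInt f x y (F y - F x)) ->
  forall x y, x <= y -> is_RInt f x y (F y - F x).
Proof.
  intros Hal Hcell.
  apply (lattice_ind p al (fun x y => is_RInt f x y (F y - F x)) Hal); [|exact Hcell].
  intros x c y _ H1 H2. replace (F y - F x) with ((F c - F x) + (F y - F c)) by ring.
  exact (is_RInt_Chasles_R f x c y _ _ H1 H2).
Qed.

Lemma nonneg_integrals_cellwise (f : R -> R) (c p al : R) : 0 < al ->
  (forall (m : Z) x y, c <= x -> x <= y -> p + IZR m * al <= x -> y <= p + IZR m * al + al ->
     exists v, 0 <= v /\ is_RInt f x y v) ->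
  forall x y, c <= x <= y -> exists v, 0 <= v /\ is_RInt f x y v.
Proof.
  intros Hal Hcell x y Hxy.
  apply (lattice_ind p al (fun x y => c <= x -> exists v, 0 <= v /\ is_RInt f x y v) Hal);
    try lra.
  - intros x' c' y' Hc H1 H2 Hx.
    destruct (H1 Hx) as [v1 [P1 I1]]. destruct (H2 ltac:(lra)) as [v2 [P2 I2]].
    exists (v1 + v2). split; [lra|]. exact (is_RInt_Chasles_R f _ _ _ _ _ I1 I2).
  - intros m x' y' H1 H2 H3 Hx. exact (Hcell m x' y' Hx H1 H2 H3).
Qed.

Lemma improper_integral_of_limit (f : R -> R) (c L : R) (x v : nat -> R) :
  (forall y z, c <= y <= z -> exists w, 0 <= w /\ is_RInt f y z w) ->
  (forall M, exists n, M <= x n) ->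
  (forall n, c <= x n) ->
  (forall n, is_RInt f c (x n) (v n)) ->
  (forall n, v n <= L) ->
  is_lim_seq v L ->
  improper_integral_eq f c L.
Proof.
  intros Hnn Hunb Hcx Hv HvL Hlim. split.
  - intros b Hb. destruct (Hnn c b) as [w [_ Hw]]; [lra|].
    constructor. apply ex_RInt_Reals_0. exists w. exact Hw.
  - intros eps Heps. apply is_lim_seq_Reals in Hlim.
    destruct (Hlim eps Heps) as [n0 Hn0]. specialize (Hn0 n0 (le_n n0)).
    unfold R_dist in Hn0. apply Rabs_def2 in Hn0.
    exists (x n0). intros b Hb Hcb.
    destruct (Hnn c b) as [V [_ HV]]; [lra|]. rewrite (Rint_of_is_RInt _ _ _ _ HV).
    (* lower bound: V = v n0 + (integral from x n0 to b) *)
    destruct (Hnn (x n0) b) as [w [Hw HIw]]; [specialize (Hcx n0); lra|].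
    pose proof (is_RInt_same_value _ _ _ _ _ HV (is_RInt_Chasles_R _ _ _ _ _ _ (Hv n0) HIw)).
    (* upper bound: V + (integral from b to x n1) = v n1 <= L *)
    destruct (Hunb b) as [n1 Hn1].
    destruct (Hnn b (x n1)) as [w' [Hw' HIw']]; [lra|].
    pose proof (is_RInt_same_value _ _ _ _ _ (Hv n1) (is_RInt_Chasles_R _ _ _ _ _ _ HV HIw')).
    specialize (HvL n1). apply Rabs_def1; lra.
Qed.

Lemma Nminus_pos (a : R) : 0 < a -> 0 < Nminus a.
Proof.
  intros ha. unfold Nminus. pose proof (exp_ineq1 a ltac:(lra)).
  apply Rdiv_lt_0_compat; lra.
Qed.

Lemma Nplus_eq (a : R) : Nplus a = exp a * Nminus a.
Proof. unfold Nplus, Nminus, Rdiv. ring. Qed.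

Lemma Nplus_pos (a : R) : 0 < a -> 0 < Nplus a.
Proof.
  intros ha. rewrite Nplus_eq. pose proof (exp_pos a). pose proof (Nminus_pos a ha). nra.
Qed.

(* The normalization N^+ (2 - e^{-a}) = 1 that makes the total mass equal 1. *)
Lemma Nplus_normalization (a : R) : 0 < a -> Nplus a * (2 - exp (- a)) = 1.
Proof.
  intros ha. unfold Nplus. rewrite exp_Ropp.
  pose proof (exp_pos a). pose proof (exp_ineq1 a ltac:(lra)). field. lra.
Qed.

Lemma sigma_profile (a tau : R) : 0 < tau < a ->
  sigmaA a (Nplus a * exp (- tau)) = a + tau.
Proof.
  intros Htau. pose proof (Nminus_pos a ltac:(lra)) as Hm.
  pose proof (exp_pos a). pose proof (exp_pos (- tau)).
  assert (E1 : exp (- tau) < 1) by (rewrite <- exp_0; apply exp_increasing; lra).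
  assert (E2 : 1 < exp a * exp (- tau)).
  { rewrite <- exp_plus, <- exp_0. apply exp_increasing. lra. }
  unfold sigmaA. rewrite Nplus_eq.
  destruct (Rle_dec (exp a * Nminus a * exp (- tau)) (Nminus a)); [exfalso; nra|].
  destruct (Rle_dec (exp a * Nminus a * exp (- tau)) (exp a * Nminus a)) as [_|D];
    [|exfalso; apply D; nra].
  rewrite (ln_mult (exp a * Nminus a)), (ln_mult (exp a)), !ln_exp by nra. ring.
Qed.

Section Sawtooth.

Variable a : R.
Variable N : R -> R.
Hypothesis ha : 0 < a.
Hypothesis Nper : forall x, N (x + a) = N x.
Hypothesis Nform : forall x, 0 < x < a -> N x = Nplus a * exp (- x).

Lemma N_periodic_Z (m : Z) (x : R) : N (x + IZR m * a) = N x.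
Proof.
  assert (Hn : forall n x, N (x + INR n * a) = N x).
  { induction n as [|n IH]; intros y.
    - simpl. f_equal. ring.
    - rewrite S_INR. replace (y + (INR n + 1) * a) with ((y + INR n * a) + a) by ring.
      rewrite Nper. apply IH. }
  destruct (Z_le_gt_dec 0 m).
  - rewrite <- (Z2Nat.id m) by lia. rewrite <- INR_IZR_INZ. apply Hn.
  - replace m with (- Z.of_nat (Z.to_nat (- m)))%Z by lia.
    rewrite opp_IZR, <- INR_IZR_INZ.
    rewrite <- (Hn (Z.to_nat (- m)) (x + - INR (Z.to_nat (- m)) * a)).
    f_equal. ring.
Qed.

Lemma N_cell (m : Z) (x : R) : IZR m * a < x < IZR m * a + a ->
  N x = Nplus a * exp (- (x - IZR m * a)).
Proof.
  intros Hx. pose proof (N_periodic_Z m (x - IZR m * a)) as E.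
  replace (x - IZR m * a + IZR m * a) with x in E by ring.
  rewrite E. apply Nform. lra.
Qed.

Lemma sigma_N_cell (m : Z) (x : R) : IZR m * a < x < IZR m * a + a ->
  sigmaA a (N x) = a + (x - IZR m * a).
Proof. intros Hx. rewrite (N_cell m x Hx). apply sigma_profile. lra. Qed.

(* N jumps from N^+ e^{-a} up to N^+ at every multiple of a. *)
Lemma N_jump (k : Z) : ~ continuity_pt N (IZR k * a).
Proof.
  intros Hc. pose proof (Nplus_pos a ha) as HP.
  set (gap := exp (- (a / 4)) - exp (- (3 * a / 4))).
  assert (Hgap : 0 < gap) by (apply Rlt_0_minus, exp_increasing; lra).
  destruct (Hc (Nplus a * gap / 2)) as [del [Hdel Hnear]]; [nra|].
  set (h := Rmin (del / 2) (a / 4)).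
  assert (Hh : 0 < h <= a / 4 /\ h < del).
  { unfold h. pose proof (Rmin_l (del / 2) (a / 4)). pose proof (Rmin_r (del / 2) (a / 4)).
    split; [split|]; try lra. apply Rmin_glb_lt; lra. }
  assert (Right : Rabs (N (IZR k * a + h) - N (IZR k * a)) < Nplus a * gap / 2).
  { apply Hnear. split; [split; [exact I|lra]|].
    simpl. unfold Rdist. replace (IZR k * a + h - IZR k * a) with h by ring.
    rewrite Rabs_right; lra. }
  assert (Left : Rabs (N (IZR k * a - h) - N (IZR k * a)) < Nplus a * gap / 2).
  { apply Hnear. split; [split; [exact I|lra]|].
    simpl. unfold Rdist. replace (IZR k * a - h - IZR k * a) with (- h) by ring.
    rewrite Rabs_Ropp, Rabs_right; lra. }
  assert (Eprev : IZR (k - 1) * a = IZR k * a - a) by (rewrite minus_IZR; ring).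
  rewrite (N_cell k) in Right by lra.
  rewrite (N_cell (k - 1)) in Left by (rewrite Eprev; lra).
  rewrite Eprev in Left.
  replace (IZR k * a + h - IZR k * a) with h in Right by ring.
  replace (IZR k * a - h - (IZR k * a - a)) with (a - h) in Left by ring.
  apply Rabs_def2 in Right. apply Rabs_def2 in Left.
  (* the right value is at least N^+ e^{-a/4}, the left one at most N^+ e^{-3a/4} *)
  assert (B1 : exp (- (a / 4)) <= exp (- h)) by (apply exp_le_compat; lra).
  assert (B2 : exp (- (a - h)) <= exp (- (3 * a / 4))) by (apply exp_le_compat; lra).
  unfold gap in *. nra.
Qed.

Lemma inner_ind_cell (s t u : R) (m : Z) :
  IZR m * a < t - s + u < IZR m * a + a ->
  inner_ind a N s t u = if Rlt_dec (a + t - s - IZR m * a) 0 then 1 else 0.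
Proof.
  intros Hu. unfold inner_ind. rewrite (sigma_N_cell m _ Hu).
  destruct (Rlt_dec (a + (t - s + u - IZR m * a)) u);
  destruct (Rlt_dec (a + t - s - IZR m * a) 0); lra.
Qed.

(* With t - s = q a + b, the integrand is the step 1_{u > 2a - b} (up to the
   lattice points), whose primitive is max(0, u - (2a - b)). *)
Lemma inner_is_RInt (s t : R) (q : Z) (b : R) :
  0 <= b < a -> t - s = IZR q * a + b ->
  forall x y, x <= y -> is_RInt (inner_ind a N s t) x y
    (Rmax 0 (y - (2 * a - b)) - Rmax 0 (x - (2 * a - b))).
Proof.
  intros Hb Hq.
  apply (is_RInt_cellwise _ (fun u => Rmax 0 (u - (2 * a - b))) (s - t) a ha).
  intros m x y Hxy Hx Hy.
  assert (Hval : forall u, x < u < y ->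
    inner_ind a N s t u = if Rlt_dec (a + t - s - IZR m * a) 0 then 1 else 0)
    by (intros u Hu; apply inner_ind_cell; lra).
  (* the jump 2a - b = s - t + (q + 2) a is a cell endpoint *)
  destruct (Z_le_gt_dec m (q + 1)) as [Hm|Hm].
  - assert (Hmq : IZR m * a <= IZR q * a + a).
    { replace (IZR q * a + a) with (IZR (q + 1) * a) by (rewrite plus_IZR; ring).
      apply Rmult_le_compat_r; [lra|]. now apply IZR_le. }
    rewrite !Rmax_left by lra. replace (0 - 0) with ((y - x) * 0) by ring.
    apply is_RInt_const_on; [exact Hxy|].
    intros u Hu. rewrite (Hval u Hu). destruct Rlt_dec; [lra|reflexivity].
  - assert (Hmq : IZR q * a + 2 * a <= IZR m * a).
    { replace (IZR q * a + 2 * a) with (IZR (q + 2) * a) by (rewrite plus_IZR; ring).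
      apply Rmult_le_compat_r; [lra|]. apply IZR_le. lia. }
    rewrite !Rmax_right by lra.
    replace (y - (2 * a - b) - (x - (2 * a - b))) with ((y - x) * 1) by ring.
    apply is_RInt_const_on; [exact Hxy|].
    intros u Hu. rewrite (Hval u Hu). destruct Rlt_dec; [reflexivity|lra].
Qed.

Lemma inner_integral (s t : R) (q : Z) (b : R) :
  0 <= b < a -> t - s = IZR q * a + b -> 0 <= s ->
  Rint (inner_ind a N s t) 0 s = Rmax 0 (s - (2 * a - b)).
Proof.
  intros Hb Hq Hs. apply Rint_of_is_RInt.
  replace (Rmax 0 (s - (2 * a - b))) with
    (Rmax 0 (s - (2 * a - b)) - Rmax 0 (0 - (2 * a - b)))
    by (rewrite (Rmax_left 0 (0 - _)) by lra; ring).
  now apply (inner_is_RInt s t q b).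
Qed.

Lemma inner_Riemann_integrable (s t : R) :
  inhabited (Riemann_integrable (inner_ind a N s t) 0 s).
Proof.
  destruct (lattice_floor 0 a (t - s) ha) as [q Hq].
  assert (Hint : forall x y, x <= y -> ex_RInt (inner_ind a N s t) x y).
  { intros x y Hxy. eexists. apply (inner_is_RInt s t q (t - s - IZR q * a)); lra. }
  constructor. apply ex_RInt_Reals_0.
  destruct (Rle_dec 0 s); [apply Hint; lra | apply ex_RInt_swap, Hint; lra].
Qed.

Section Density.

Variables (t theta : R) (k : Z).
Hypothesis Ht : t = IZR k * a + theta.
Hypothesis Htheta : 0 < theta < a.

Lemma N_at_t : N t = Nplus a * exp (- theta).
Proof. rewrite (N_cell k t) by lra. f_equal. f_equal. lra. Qed.

Lemma sigma_at_t : sigmaA a (N t) = theta + a.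
Proof. rewrite (sigma_N_cell k t) by lra. lra. Qed.

(* The density n(., t) on the s-cell (theta + m a, theta + m a + a). *)
Definition ncell (m : Z) (s : R) : R :=
  Nplus a * exp (- (theta + IZR m * a + a - s)) * exp (- Rmax 0 (theta + IZR m * a - a)).

Lemma nsol_cell (m : Z) (s : R) :
  0 <= s -> theta + IZR m * a < s < theta + IZR m * a + a -> nsol a N s t = ncell m s.
Proof.
  intros Hs Hm. unfold nsol, ncell.
  (* t - s lies in the N-cell of index k - m - 1 *)
  set (q := (k - m - 1)%Z).
  assert (Hq : IZR q * a = IZR k * a - IZR m * a - a) by (unfold q; rewrite !minus_IZR; ring).
  rewrite (N_cell q) by lra.
  rewrite (inner_integral s t q (theta + IZR m * a + a - s)) by lra.
  replace (t - s - IZR q * a) with (theta + IZR m * a + a - s) by lra.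
  replace (s - (2 * a - (theta + IZR m * a + a - s))) with (theta + IZR m * a - a) by ring.
  reflexivity.
Qed.

(* ncell m is its own derivative, hence its own primitive. *)
Lemma ncell_is_RInt (m : Z) (x y : R) : is_RInt (ncell m) x y (ncell m y - ncell m x).
Proof.
  apply (is_RInt_derive (ncell m) (ncell m)).
  - intros s _. unfold ncell. auto_derive; [exact I|].
    replace (- - (1)) with 1 by ring. rewrite Rmult_1_l. reflexivity.
  - intros s _. apply (@ex_derive_continuous R_AbsRing R_NormedModule).
    unfold ncell. auto_derive. exact I.
Qed.

Lemma ncell_increasing (m : Z) (x y : R) : x <= y -> ncell m x <= ncell m y.
Proof.
  intros Hxy. unfold ncell. pose proof (Nplus_pos a ha).
  apply Rmult_le_compat_r; [left; apply exp_pos|].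
  apply Rmult_le_compat_l; [lra|]. apply exp_le_compat. lra.
Qed.

Lemma nsol_cell_integral (m : Z) (x y : R) : 0 <= x -> x <= y ->
  theta + IZR m * a <= x -> y <= theta + IZR m * a + a ->
  is_RInt (fun s => nsol a N s t) x y (ncell m y - ncell m x).
Proof.
  intros H0 Hxy Hx Hy. apply (is_RInt_ext (ncell m)); [|apply ncell_is_RInt].
  intros s Hs. rewrite Rmin_left, Rmax_right in Hs by lra.
  symmetry. apply nsol_cell; lra.
Qed.

Lemma nsol_integrals_nonneg (x y : R) :
  0 <= x <= y -> exists v, 0 <= v /\ is_RInt (fun s => nsol a N s t) x y v.
Proof.
  apply (nonneg_integrals_cellwise _ 0 theta a ha).
  intros m x' y' H0 Hxy Hx Hy. exists (ncell m y' - ncell m x'). split.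
  - pose proof (ncell_increasing m x' y' Hxy). lra.
  - now apply nsol_cell_integral.
Qed.

Lemma nsol_full_cell (m : Z) : (0 <= m)%Z ->
  is_RInt (fun s => nsol a N s t) (theta + IZR m * a) (theta + IZR m * a + a)
    (Nplus a * (1 - exp (- a)) * exp (- Rmax 0 (theta + IZR m * a - a))).
Proof.
  intros Hm. assert (Hma : 0 <= IZR m * a) by (apply Rmult_le_pos; [apply IZR_le; exact Hm|lra]).
  replace (Nplus a * (1 - exp (- a)) * exp (- Rmax 0 (theta + IZR m * a - a))) with
    (ncell m (theta + IZR m * a + a) - ncell m (theta + IZR m * a)).
  - apply nsol_cell_integral; lra.
  - unfold ncell.
    replace (- (theta + IZR m * a + a - (theta + IZR m * a + a))) with 0 by ring.
    replace (- (theta + IZR m * a + a - (theta + IZR m * a))) with (- a) by ring.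
    rewrite exp_0. ring.
Qed.

Lemma nsol_head :
  is_RInt (fun s => nsol a N s t) 0 (theta + a)
    (Nplus a * (2 - exp (- a)) - Nplus a * exp (- theta)).
Proof.
  assert (Hfirst : is_RInt (fun s => nsol a N s t) 0 theta (ncell (-1) theta - ncell (-1) 0))
    by (apply nsol_cell_integral; change (IZR (-1)) with (-1); lra).
  assert (Hsecond := nsol_full_cell 0 (Z.le_refl 0)).
  change (IZR 0) with 0 in Hsecond. rewrite Rmult_0_l, Rplus_0_r in Hsecond.
  replace (Nplus a * (2 - exp (- a)) - Nplus a * exp (- theta)) with
    ((ncell (-1) theta - ncell (-1) 0) + Nplus a * (1 - exp (- a)) * exp (- Rmax 0 (theta - a))).
  - exact (is_RInt_Chasles_R _ _ _ _ _ _ Hfirst Hsecond).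
  - unfold ncell. change (IZR (-1)) with (-1).
    rewrite !Rmax_left by lra.
    replace (- (theta + -1 * a + a - theta)) with 0 by ring.
    replace (- (theta + -1 * a + a - 0)) with (- theta) by ring.
    rewrite Ropp_0, exp_0. ring.
Qed.

Lemma nsol_tail (n : nat) :
  is_RInt (fun s => nsol a N s t) (theta + a) (theta + a + INR n * a)
    (Nplus a * exp (- theta) * (1 - exp (- a) ^ n)).
Proof.
  induction n as [|n IH].
  - simpl. rewrite Rmult_0_l, Rplus_0_r, Rminus_diag, Rmult_0_r.
    exact (is_RInt_point (V := R_NormedModule) _ _).
  - set (m := (Z.of_nat n + 1)%Z).
    assert (Hm : IZR m * a = a + INR n * a) by (unfold m; rewrite plus_IZR, <- INR_IZR_INZ; ring).
    assert (Hcell := nsol_full_cell m ltac:(lia)).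
    rewrite Hm, Rmax_right in Hcell by (pose proof (pos_INR n); nra).
    replace (- (theta + (a + INR n * a) - a)) with (- theta + - (INR n * a)) in Hcell by ring.
    rewrite exp_plus, exp_neg_nat_mul in Hcell.
    replace (theta + (a + INR n * a)) with (theta + a + INR n * a) in Hcell by ring.
    replace (theta + a + INR (S n) * a) with (theta + a + INR n * a + a) by (rewrite S_INR; ring).
    replace (Nplus a * exp (- theta) * (1 - exp (- a) ^ S n)) with
      (Nplus a * exp (- theta) * (1 - exp (- a) ^ n) +
       Nplus a * (1 - exp (- a)) * (exp (- theta) * exp (- a) ^ n)) by (simpl pow; ring).
    exact (is_RInt_Chasles_R _ _ _ _ _ _ IH Hcell).
Qed.

Lemma nsol_total (n : nat) :
  is_RInt (fun s => nsol a N s t) 0 (theta + a + INR n * a)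
    (1 - Nplus a * exp (- theta) * exp (- a) ^ n).
Proof.
  replace (1 - Nplus a * exp (- theta) * exp (- a) ^ n) with
    ((Nplus a * (2 - exp (- a)) - Nplus a * exp (- theta)) +
     Nplus a * exp (- theta) * (1 - exp (- a) ^ n))
    by (rewrite (Nplus_normalization a ha); ring).
  exact (is_RInt_Chasles_R _ _ _ _ _ _ nsol_head (nsol_tail n)).
Qed.

Lemma nsol_improper (c L C : R) : 0 <= c <= theta + a -> 0 <= C ->
  (forall n : nat, is_RInt (fun s => nsol a N s t) c (theta + a + INR n * a)
                     (L - C * exp (- a) ^ n)) ->
  improper_integral_eq (fun s => nsol a N s t) c L.
Proof.
  intros Hc HC Hint.
  assert (Hq : 0 < exp (- a) < 1).
  { split; [apply exp_pos|]. rewrite <- exp_0. apply exp_increasing. lra. }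
  apply (improper_integral_of_limit _ c L (fun n => theta + a + INR n * a)
           (fun n => L - C * exp (- a) ^ n)).
  - intros y z Hyz. apply nsol_integrals_nonneg. lra.
  - intros M. destruct (nat_above ((M - theta - a) / a)) as [n Hn]. exists n.
    assert (E : (M - theta - a) / a * a = M - theta - a) by (field; lra). nra.
  - intros n. pose proof (pos_INR n). nra.
  - exact Hint.
  - intros n. pose proof (pow_le (exp (- a)) n ltac:(lra)). nra.
  - assert (Hlim : is_lim_seq (fun n => L - C * exp (- a) ^ n) (L - C * 0)).
    { apply is_lim_seq_minus'; [apply is_lim_seq_const|].
      apply is_lim_seq_mult'; [apply is_lim_seq_const|].
      apply is_lim_seq_geom. rewrite Rabs_right; lra. }
    now rewrite Rmult_0_r, Rminus_0_r in Hlim.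
Qed.

Lemma nsol_mass_beyond_threshold :
  improper_integral_eq (fun s => nsol a N s t) (sigmaA a (N t)) (N t).
Proof.
  rewrite sigma_at_t, N_at_t.
  pose proof (Nplus_pos a ha). pose proof (exp_pos (- theta)).
  apply (nsol_improper _ _ (Nplus a * exp (- theta))); [lra|nra|].
  intros n.
  replace (Nplus a * exp (- theta) - Nplus a * exp (- theta) * exp (- a) ^ n)
    with (Nplus a * exp (- theta) * (1 - exp (- a) ^ n)) by ring.
  apply nsol_tail.
Qed.

Lemma nsol_total_mass : improper_integral_eq (fun s => nsol a N s t) 0 1.
Proof.
  pose proof (Nplus_pos a ha). pose proof (exp_pos (- theta)).
  apply (nsol_improper _ _ (Nplus a * exp (- theta))); [lra|nra|].
  exact nsol_total.
Qed.

End Density.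

End Sawtooth.

Theorem mainTheorem11 (a : R) (N : R -> R) (t : R)
  (ha : 0 < a)
  (Nper : forall x, N (x + a) = N x)
  (Nform : forall x, 0 < x < a -> N x = Nplus a * exp (- x))
  (Ncont : continuity_pt N t) :
  (forall s, 0 <= s -> inhabited (Riemann_integrable (inner_ind a N s t) 0 s)) /\
  improper_integral_eq (fun s => nsol a N s t) (sigmaA a (N t)) (N t) /\
  improper_integral_eq (fun s => nsol a N s t) 0 1.
Proof.
  destruct (lattice_floor 0 a t ha) as [k Hk].
  set (theta := t - IZR k * a).
  assert (Ht : t = IZR k * a + theta) by (unfold theta; ring).
  (* N is discontinuous at multiples of a, so t is not one *)
  assert (Htheta : 0 < theta < a).
  { split; [|lra]. destruct (Req_dec theta 0) as [E|E]; [|lra].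
    exfalso. apply (N_jump a N ha Nper Nform k).
    replace (IZR k * a) with t by lra. exact Ncont. }
  split; [|split].
  - intros s _. apply (inner_Riemann_integrable a N ha Nper Nform).
  - exact (nsol_mass_beyond_threshold a N ha Nper Nform t theta k Ht Htheta).
  - exact (nsol_total_mass a N ha Nper Nform t theta k Ht Htheta).
Qed.
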